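(* Define on $(0,\infty)^4$ the function $$S(x_1,x_2,x_3,x_4)=(x_1^2x_2^2x_3^2x_4)^{1/7}\Big[\tfrac{12}{x_1}+\tfrac{12}{x_2}+\tfrac{12}{x_3}+\tfrac{6}{x_4}-2\Big(\tfrac{x_1}{x_2x_3}+\tfrac{x_2}{x_1x_3}+\tfrac{x_3}{x_1x_2}\Big)-3\Big(\tfrac{x_1}{x_2x_4}+\tfrac{x_2}{x_1x_4}+\tfrac{x_4}{x_1x_2}\Big)\Big].$$ Let $x^*=(x_1,x_2,x_3,x_4)\approx(5.67352,1.09220,5.50695,5.72906)$ be the critical point of $S$ corresponding to Nikonorov's non-block-diagonal $\mathrm{SU}(3)$-invariant Einstein metric on $N^{130}$. Then $\frac{\partial^2 S}{\partial x_2^2}(x^* )>0$.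
   Context: $S$ is, up to a positive constant factor, the normalized total scalar curvature $\mathrm{Vol}^{2/7}\cdot s$ of the $\mathrm{SU}(3)$-invariant metrics $x_1Q'|_{\mathfrak p_1}\oplus x_2Q'|_{\mathfrak p_2}\oplus x_3Q'|_{\mathfrak p_3}\oplus x_4Q'|_{\mathfrak p_4}$ on the Aloff–Wallach space $N^{130}=N_{1,0}$, where $Q'(X,Y)=-\frac12\mathrm{tr}(XY)$ and $\mathfrak p_1\oplus\cdots\oplus\mathfrak p_4$ is Nikonorov's $\mathrm{Ad}$-invariant decomposition with parameter $\sin^2(2\alpha)=1$; Einstein metrics in this family are critical points of $S$. *)

From Stdlib Require Import Reals Lra.
From Coquelicot Require Import Coquelicot.
Open Scope R_scope.

Definition S (x1 x2 x3 x4 : R) : R :=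
  Rpower (x1^2 * x2^2 * x3^2 * x4) (1/7) *
  ( 12/x1 + 12/x2 + 12/x3 + 6/x4
    - 2 * (x1/(x2*x3) + x2/(x1*x3) + x3/(x1*x2))
    - 3 * (x1/(x2*x4) + x2/(x1*x4) + x4/(x1*x2)) ).

Definition critical_point_S (x1 x2 x3 x4 : R) : Prop :=
  is_derive (fun t => S t x2 x3 x4) x1 0 /\
  is_derive (fun t => S x1 t x3 x4) x2 0 /\
  is_derive (fun t => S x1 x2 t x4) x3 0 /\
  is_derive (fun t => S x1 x2 x3 t) x4 0.

Definition d22S (x1 x2 x3 x4 : R) : R :=
  Derive (fun t => Derive (fun s => S x1 s x3 x4) t) x2.

(* Along the x2-direction, S is (K t^2)^(1/7) (a + b/t + c t) with K = x1^2 x3^2 x4, i.e. a combination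
   of t^(2/7), t^(-5/7) and t^(9/7); its second derivative is
   (K t^2)^(1/7) (60 b - 10 a t + 18 c t^2) / (49 t^3).  Near x*, the coefficient
   b = 2 - 2 (x1-x3)^2/(x1 x3) - 3 (x1-x4)^2/(x1 x4) is almost 2, while a <= 6,
   c >= -1/5 and t < 11/10, so the term 60 b dominates. *)
From Stdlib Require Import Reals Lra.
From Coquelicot Require Import Coquelicot.
Open Scope R_scope.

Definition S_slice (K a b c t : R) : R :=
  Rpower (K * t ^ 2) (1 / 7) * (a + b / t + c * t).

Definition S_slice_d1 (K a b c t : R) : R :=
  Rpower (K * t ^ 2) (1 / 7) * (2 / 7 * a / t - 5 / 7 * b / t ^ 2 + 9 / 7 * c).

Definition S_slice_d2 (K a b c t : R) : R :=
  Rpower (K * t ^ 2) (1 / 7) * (60 * b - 10 * a * t + 18 * c * t ^ 2) / (49 * t ^ 3).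

Section Slice.

Variables K a b c : R.
Hypothesis K_gt0 : 0 < K.

Lemma is_derive_S_slice (t : R) :
  0 < t -> is_derive (S_slice K a b c) t (S_slice_d1 K a b c t).
Proof.
intros t_gt0; unfold S_slice, S_slice_d1, Rpower.
auto_derive.
- repeat split; try lra; try (apply Rmult_integral_contrapositive_currified; lra).
  repeat apply Rmult_lt_0_compat; lra.
- set (e := exp _); clearbody e.
  field; lra.
Qed.

Lemma is_derive_S_slice_d1 (t : R) :
  0 < t -> is_derive (S_slice_d1 K a b c) t (S_slice_d2 K a b c t).
Proof.
intros t_gt0; unfold S_slice_d1, S_slice_d2, Rpower.
auto_derive.
- repeat split; try lra; try (apply Rmult_integral_contrapositive_currified; lra).
  repeat apply Rmult_lt_0_compat; lra.
- set (e := exp _); clearbody e.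
  field; lra.
Qed.

Lemma Derive2_S_slice (t : R) :
  0 < t -> Derive (fun s => Derive (S_slice K a b c) s) t = S_slice_d2 K a b c t.
Proof.
intros t_gt0; apply is_derive_unique.
apply (is_derive_ext_loc (S_slice_d1 K a b c)); [| now apply is_derive_S_slice_d1].
apply (filter_imp (fun s => 0 < s)); [| now apply open_gt].
intros s s_gt0; symmetry; apply is_derive_unique, is_derive_S_slice, s_gt0.
Qed.

Lemma S_slice_d2_gt0 (t : R) :
  0 < t -> 0 < 60 * b - 10 * a * t + 18 * c * t ^ 2 -> 0 < S_slice_d2 K a b c t.
Proof.
intros t_gt0 poly_gt0; unfold S_slice_d2, Rdiv.
apply Rmult_lt_0_compat.
- apply Rmult_lt_0_compat; [apply exp_pos | exact poly_gt0].
- apply Rinv_0_lt_compat, Rmult_lt_0_compat; [lra | now apply pow_lt].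
Qed.

End Slice.

Lemma Derive2_ext_pos (f g : R -> R) (t : R) :
  0 < t -> (forall s, 0 < s -> f s = g s) ->
  Derive (fun s => Derive f s) t = Derive (fun s => Derive g s) t.
Proof.
intros t_gt0 fg; apply Derive_ext_loc.
apply (filter_imp (fun s => 0 < s)); [| now apply open_gt].
intros s s_gt0; apply Derive_ext_loc.
apply (filter_imp (fun s => 0 < s)); [exact fg | apply open_gt, s_gt0].
Qed.

Lemma S_eq_slice (x1 x3 x4 t : R) :
  0 < x1 -> 0 < x3 -> 0 < x4 -> 0 < t ->
  S x1 t x3 x4 =
  S_slice (x1 ^ 2 * x3 ^ 2 * x4) (12 / x1 + 12 / x3 + 6 / x4)
    (2 - 2 * ((x1 - x3) ^ 2 / (x1 * x3)) - 3 * ((x1 - x4) ^ 2 / (x1 * x4)))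
    (- (2 / (x1 * x3) + 3 / (x1 * x4))) t.
Proof.
intros x1_gt0 x3_gt0 x4_gt0 t_gt0; unfold S, S_slice.
replace (x1 ^ 2 * t ^ 2 * x3 ^ 2 * x4) with (x1 ^ 2 * x3 ^ 2 * x4 * t ^ 2) by ring.
f_equal; field; lra.
Qed.

Lemma S_slice_coefs_bounds (x1 x3 x4 : R) :
  5 <= x1 -> 5 <= x3 -> 5 <= x4 ->
  -1/2 <= x1 - x3 <= 1/2 -> -1/2 <= x1 - x4 <= 1/2 ->
  12 / x1 + 12 / x3 + 6 / x4 <= 6 /\
  39 / 20 <= 2 - 2 * ((x1 - x3) ^ 2 / (x1 * x3)) - 3 * ((x1 - x4) ^ 2 / (x1 * x4)) /\
  -1/5 <= - (2 / (x1 * x3) + 3 / (x1 * x4)).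
Proof.
intros x1_ge5 x3_ge5 x4_ge5 d13 d14.
assert (x13_ge25 : 25 <= x1 * x3) by nra.
assert (x14_ge25 : 25 <= x1 * x4) by nra.
assert (a1 : 12 / x1 <= 12 / 5) by (apply Rle_div_l; lra).
assert (a3 : 12 / x3 <= 12 / 5) by (apply Rle_div_l; lra).
assert (a4 : 6 / x4 <= 6 / 5) by (apply Rle_div_l; lra).
assert (b3 : (x1 - x3) ^ 2 / (x1 * x3) <= 1 / 100) by (apply Rle_div_l; nra).
assert (b4 : (x1 - x4) ^ 2 / (x1 * x4) <= 1 / 100) by (apply Rle_div_l; nra).
assert (c3 : 2 / (x1 * x3) <= 2 / 25) by (apply Rle_div_l; lra).
assert (c4 : 3 / (x1 * x4) <= 3 / 25) by (apply Rle_div_l; lra).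
lra.
Qed.

Lemma S_slice_poly_gt0 (a b c t : R) :
  a <= 6 -> 39 / 20 <= b -> -1/5 <= c -> 0 < t <= 11 / 10 ->
  0 < 60 * b - 10 * a * t + 18 * c * t ^ 2.
Proof. intros; nra. Qed.

Theorem proposition2p5 (x1 x2 x3 x4 : R) :
  0 < x1 -> 0 < x2 -> 0 < x3 -> 0 < x4 ->
  Rabs (x1 - (567352/100000)) <= 1/100000 ->
  Rabs (x2 - (109220/100000)) <= 1/100000 ->
  Rabs (x3 - (550695/100000)) <= 1/100000 ->
  Rabs (x4 - (572906/100000)) <= 1/100000 ->
  critical_point_S x1 x2 x3 x4 ->
  0 < d22S x1 x2 x3 x4.
Proof.
intros x1_gt0 x2_gt0 x3_gt0 x4_gt0 b1 b2 b3 b4 _.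
apply Rabs_le_between' in b1, b2, b3, b4.
destruct (S_slice_coefs_bounds x1 x3 x4) as (a_le & b_ge & c_ge); try lra.
assert (K_gt0 : 0 < x1 ^ 2 * x3 ^ 2 * x4)
  by (repeat apply Rmult_lt_0_compat; try apply pow_lt; lra).
unfold d22S.
rewrite (Derive2_ext_pos _ _ x2 x2_gt0
           (fun s => S_eq_slice x1 x3 x4 s x1_gt0 x3_gt0 x4_gt0)).
rewrite Derive2_S_slice by assumption.
apply S_slice_d2_gt0; try assumption.
apply S_slice_poly_gt0; lra.
Qed.
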